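(* Let $G$ be a topological rough group, with topology $\tau$ on $\overline{G}$ and subspace topology $\tau_G$ on $G$, such that the rough identity $e$ belongs to $G$, $\overline{G}$ is closed under multiplication, and $G$ is an open set in $(\overline{G},\tau)$. Let $\mathcal{B}$ be a base for $\tau_G$ and $\mathcal{B}_e=\{O\in\mathcal{B}: e\in O\}$. Then for every $g\in G$, the base at $g$ in $\overline{G}$ is given by $\mathcal{B}_g=\{gO: O\in\mathcal{B}_e\}$; that is, for every open set $V$ of $\overline{G}$ with $g\in V$ there is $O\in\mathcal{B}_e$ with $gO\subseteq V$.
   Context: An approximation space is a pair $(U,R)$ with $U$ a set and $R$ an equivalence relation on $U$; for $X\subseteq U$, $\overline{X}=\bigcup\{[x]_R : [x]_R\cap X\neq\emptyset\}$. Let $U$ carry a binary operation written $xy$. A subset $G\subseteq U$ is a rough group if: (1) $xy\in\overline{G}$ for all $x,y\in G$; (2) $(xy)z=x(yz)$ for all $x,y,z\in\overline{G}$; (3) there is $e\in\overline{G}$ with $xe=ex=x$ for all $x\in G$; (4) for every $x\in G$ there is $y\in G$ with $xy=yx=e$ (written $x^{-1}$). A topological rough group is a rough group $G$ with a topology $\tau$ on $\overline{G}$, $\tau_G$ the subspace topology on $G$, such that $G\times G\to\overline{G}$, $(x,y)\mapsto xy$, is continuous (product of $\tau_G$ to $\tau$) and $G\to G$, $x\mapsto x^{-1}$, is continuous for $\tau_G$. For a base $\mathcal{B}$ of $\tau_G$ and a point $g$, the family $\{O\in\mathcal{B}: g\in O\}$ is called the base at $g$; $gO=\{go:o\in O\}$.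 *)

Definition subset {U : Type} (A B : U -> Prop) : Prop := forall x, A x -> B x.

Definition is_equiv {U : Type} (R : U -> U -> Prop) : Prop :=
  (forall x, R x x) /\ (forall x y, R x y -> R y x) /\
  (forall x y z, R x y -> R y z -> R x z).

(* upper approximation: union of the classes [x]_R meeting X *)
Definition upper {U : Type} (R : U -> U -> Prop) (X : U -> Prop) : U -> Prop :=
  fun z => exists x, R x z /\ (exists y, R x y /\ X y).

Definition is_rough_group {U : Type} (mul : U -> U -> U) (R : U -> U -> Prop)
  (G : U -> Prop) (e : U) (inv : U -> U) : Prop :=
  (forall x y, G x -> G y -> upper R G (mul x y)) /\
  (forall x y z, upper R G x -> upper R G y -> upper R G z ->
     mul (mul x y) z = mul x (mul y z)) /\
  upper R G e /\ (forall x, G x -> mul x e = x /\ mul e x = x) /\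
  (forall x, G x -> G (inv x) /\ mul x (inv x) = e /\ mul (inv x) x = e).

Definition is_topology {U : Type} (X : U -> Prop) (tau : (U -> Prop) -> Prop) : Prop :=
  (forall A, tau A -> subset A X) /\
  tau (fun _ => False) /\ tau X /\
  (forall F : (U -> Prop) -> Prop, (forall A, F A -> tau A) ->
     tau (fun x => exists A, F A /\ A x)) /\
  (forall A B, tau A -> tau B -> tau (fun x => A x /\ B x)).

Definition subspace {U : Type} (tau : (U -> Prop) -> Prop) (Y : U -> Prop)
  : (U -> Prop) -> Prop :=
  fun W => exists A, tau A /\ (forall x, W x <-> (A x /\ Y x)).

Definition is_base {U : Type} (T B : (U -> Prop) -> Prop) : Prop :=
  (forall O, B O -> T O) /\
  (forall W, T W -> forall x, W x -> exists O, B O /\ O x /\ subset O W).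

Definition prod_open {U : Type} (T1 T2 : (U -> Prop) -> Prop) (P : U * U -> Prop)
  : Prop :=
  forall p, P p -> exists A B, T1 A /\ T2 B /\ A (fst p) /\ B (snd p) /\
    (forall a b, A a -> B b -> P (a, b)).

(* topological rough group: tau topology on upper R G, tau_G the subspace
   topology on G, multiplication G x G -> upper R G and inversion G -> G
   continuous. *)
Definition is_top_rough_group {U : Type} (mul : U -> U -> U) (R : U -> U -> Prop)
  (G : U -> Prop) (e : U) (inv : U -> U) (tau : (U -> Prop) -> Prop) : Prop :=
  is_equiv R /\ is_rough_group mul R G e inv /\ is_topology (upper R G) tau /\
  (forall V, tau V ->
     prod_open (subspace tau G) (subspace tau G)
       (fun p => G (fst p) /\ G (snd p) /\ V (mul (fst p) (snd p)))) /\
  (forall W, subspace tau G W -> subspace tau G (fun x => G x /\ W (inv x))).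


(* Since g e = g lies in V, continuity of multiplication at (g, e) gives
   neighbourhoods A of g and W of e in G with A W contained in V; in
   particular g W is contained in V, and any basic O with e in O inside W
   works. *)

Section TopRoughGroup.

Variables (U : Type) (mul : U -> U -> U) (R : U -> U -> Prop) (G : U -> Prop)
  (e : U) (inv : U -> U) (tau : (U -> Prop) -> Prop).

Hypothesis Htop : is_top_rough_group mul R G e inv tau.

Lemma rough_mulx1 x : G x -> mul x e = x.
Proof.
  destruct Htop as [_ [[_ [_ [_ [Hid _]]]] _]].
  intros Gx. apply (Hid x Gx).
Qed.

Lemma rough_mul_continuous_at V x y :
  tau V -> G x -> G y -> V (mul x y) ->
  exists A W, subspace tau G A /\ subspace tau G W /\ A x /\ W y /\
    (forall a b, A a -> W b -> V (mul a b)).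
Proof.
  destruct Htop as [_ [_ [_ [Hmul _]]]].
  intros HV Gx Gy Vxy.
  destruct (Hmul V HV (x, y)) as [A [W [HA [HW [Ax [Wy HAW]]]]]];
    [simpl; auto |].
  exists A, W; repeat split; auto.
  intros a b Aa Wb. apply (HAW a b Aa Wb).
Qed.

Lemma rough_left_translate_nbhd g V :
  G e -> G g -> tau V -> V g ->
  exists W, subspace tau G W /\ W e /\ (forall x, W x -> V (mul g x)).
Proof.
  intros Ge Gg HV Vg.
  assert (Vge : V (mul g e)) by (rewrite rough_mulx1; assumption).
  destruct (rough_mul_continuous_at V g e HV Gg Ge Vge)
    as [A [W [_ [HW [Ag [We HAW]]]]]].
  exists W; repeat split; auto.
Qed.

End TopRoughGroup.

Theorem mainTheorem9 (U : Type) (mul : U -> U -> U) (R : U -> U -> Prop)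
  (G : U -> Prop) (e : U) (inv : U -> U) (tau : (U -> Prop) -> Prop)
  (B : (U -> Prop) -> Prop) :
  is_top_rough_group mul R G e inv tau ->
  G e ->
  (forall x y, upper R G x -> upper R G y -> upper R G (mul x y)) ->
  tau G ->
  is_base (subspace tau G) B ->
  forall g, G g ->
  forall V, tau V -> V g ->
  exists O, B O /\ O e /\ (forall x, O x -> V (mul g x)).
Proof.
  intros Htop Ge _ _ [_ Hbase] g Gg V HV Vg.
  destruct (rough_left_translate_nbhd U mul R G e inv tau Htop g V Ge Gg HV Vg)
    as [W [HW [We HgW]]].
  destruct (Hbase W HW e We) as [O [BO [Oe OW]]].
  exists O; repeat split; auto.
Qed.
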